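(* Let $r=[r_0,\ldots,r_m]$ and $c=[c_0,\ldots,c_n]$ be selections of rows and columns of the Pascal upper triangular matrix $T$. If $r_0>c_n$, then $T_{r,c}$ is the zero matrix and has rank $0$. Otherwise, define $M:=\max\{i : r_i\le c_n\}$, $\beta_0:=\min\{k : r_0\le c_k\}$, and for $i=1,\ldots,M$, $\beta_i:=\max\{\min\{k: r_i\le c_k\},\ \beta_{i-1}+1\}$; let $p:=\max\{i\in\{0,\ldots,M\} : \beta_i\le n\}$, $\alpha=[0,1,\ldots,p]$, $\beta=[\beta_0,\ldots,\beta_p]$, $\hat r=[r_0,\ldots,r_p]$ and $\hat c=[c_{\beta_0},\ldots,c_{\beta_p}]$. Then $\{\hat r,\hat c\}$ is a maximal ordered sub-pair of $\{r,c\}$; consequently $\operatorname{rank}(T_{r,c})=p+1$, $T_{\hat r,\hat c}$ is invertible, the rows of $T_{\hat r,c}$ form a basis of the row space of $T_{r,c}$, and the columns of $T_{r,\hat c}$ form a basis of the column space of $T_{r,c}$.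
   Context: The Pascal upper triangular matrix is the infinite matrix $T=(T_{i,j})_{i,j\ge 0}$ with $T_{i,j}=\binom{j}{i}$, where $\binom{j}{i}:=0$ if $i>j$ (rows and columns indexed from $0$). A selection of rows (resp. columns) is a strictly increasing finite sequence of nonnegative integers. For selections $r=[r_0,\ldots,r_m]$ and $c=[c_0,\ldots,c_n]$, $T_{r,c}$ denotes the $(m+1)\times(n+1)$ matrix whose $(i,j)$ entry is $\binom{c_j}{r_i}$. A pair $\{\hat r,\hat c\}$ is an ordered sub-pair of $\{r,c\}$ of length $p+1$ if $\hat r=[\hat r_0,\ldots,\hat r_p]$ is a subsequence of $r$, $\hat c=[\hat c_0,\ldots,\hat c_p]$ is a subsequence of $c$, and $\hat r_i\le \hat c_i$ for all $i=0,\ldots,p$ (the empty pair has length $0$). It is maximal if no ordered sub-pair of $\{r,c\}$ has length greater than $p+1$. *)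

From HB Require Import structures.
From mathcomp Require Import all_boot all_order all_algebra.
Set Implicit Arguments. Unset Strict Implicit. Unset Printing Implicit Defensive.
Import GRing.Theory Num.Theory.

Definition selection (s : seq nat) : bool := sorted ltn s.

(* The submatrix T_{r,c} of the Pascal upper triangular matrix, with explicit
   dimensions a x b; entry (i,j) is binom(c_j, r_i) (= 0 when r_i > c_j). *)
Definition Tsub (R : pzRingType) (a b : nat) (r c : seq nat) : 'M[R]_(a, b) :=
  \matrix_(i < a, j < b) (('C(nth 0 c j, nth 0 r i))%:R)%R.

Definition ordered_subpair (r c hr hc : seq nat) : Prop :=
  [/\ subseq hr r, subseq hc c, size hr = size hc &
      forall i, i < size hr -> nth 0 hr i <= nth 0 hc i].

Definition maximal_ordered_subpair (r c hr hc : seq nat) : Prop :=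
  ordered_subpair r c hr hc /\
  forall r' c', ordered_subpair r c r' c' -> size r' <= size hr.

Definition Mdef (m n : nat) (r c : seq nat) : nat :=
  \max_(i < m.+1 | nth 0 r i <= nth 0 c n) i.

Definition firstcol (r c : seq nat) (i : nat) : nat :=
  find (fun ck => nth 0 r i <= ck) c.

Fixpoint beta (r c : seq nat) (i : nat) : nat :=
  match i with
  | 0 => firstcol r c 0
  | i'.+1 => maxn (firstcol r c i'.+1) (beta r c i').+1
  end.

Definition pdef (m n : nat) (r c : seq nat) : nat :=
  \max_(i < (Mdef m n r c).+1 | beta r c i <= n) i.

Definition rhat (m n : nat) (r c : seq nat) : seq nat :=
  mkseq (fun i => nth 0 r i) (pdef m n r c).+1.

Definition chat (m n : nat) (r c : seq nat) : seq nat :=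
  mkseq (fun i => nth 0 c (beta r c i)) (pdef m n r c).+1.

From HB Require Import structures.
From mathcomp Require Import all_boot all_order all_algebra.
From mathcomp Require Import zify.
Import GRing.Theory Num.Theory.

(* The greedy choice beta picks, for the successive rows r_0, r_1, ..., the
   first column that is both large enough and strictly after the previous pick,
   so no ordered sub-pair can be longer than the greedy one, of length p + 1.
   The p + 1 by p + 1 minor it selects is a binomial determinant det[C(b_j, a_i)]
   with a, b increasing and a_i <= b_i, which is positive (total positivity of
   Pascal's matrix): subtracting consecutive columns turns each column into a
   hockey-stick sum, and expanding by multilinearity gives a sum of such
   determinants with smaller entries, one of which still satisfies a_i <= b_i.
   Conversely the rank is at most p + 1: either every row past M vanishes, or the
   greedy run ending at column n started at a row s whose first column f_s
   leaves a zero block of rows >= s and columns < f_s. *)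

Set Implicit Arguments. Unset Strict Implicit. Unset Printing Implicit Defensive.

Lemma hockey_stick a b : \sum_(k < b) 'C(k, a) = 'C(b, a.+1).
Proof. by elim: b => [|b IHb]; rewrite ?big_ord0 // big_ord_recr /= IHb binS. Qed.

Definition increasing n (a : nat -> nat) := forall i, i.+1 < n -> a i < a i.+1.

Lemma increasing_lt n a i j : increasing n a -> i < j -> j < n -> a i < a j.
Proof.
move=> inc_a; elim: j => // j IHj; rewrite ltnS leq_eqVlt => /orP[/eqP-> | lt_ij] lt_jn.
  exact: inc_a.
exact: ltn_trans (IHj lt_ij (ltnW lt_jn)) (inc_a _ lt_jn).
Qed.

Lemma increasing_le n a i j : increasing n a -> i <= j -> j < n -> a i <= a j.
Proof.
move=> inc_a; rewrite leq_eqVlt => /orP[/eqP-> // | lt_ij] lt_jn.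
exact/ltnW/(increasing_lt inc_a).
Qed.

Lemma increasing_pred n a : increasing n a -> (0 < a 0)%N ->
  increasing n (fun i => (a i).-1).
Proof.
move=> inc_a a0_gt0 i lt_in; have := inc_a i lt_in.
by have := increasing_le inc_a (leq0n i) (ltnW lt_in); rewrite /=; lia.
Qed.

Lemma increasing_behead_pred n a : increasing n.+1 a ->
  increasing n (fun i => (a i.+1).-1).
Proof.
move=> inc_a i lt_in; have := inc_a i.+1 lt_in.
by have := increasing_lt inc_a (ltn0Sn i) (ltnW lt_in); rewrite /=; lia.
Qed.

Section BinomialDeterminants.
Variable R : numDomainType.
Local Open Scope ring_scope.

Definition binom_mx n (a b : nat -> nat) : 'M[R]_n := \matrix_(i, j) ('C(b j, a i))%:R.

Definition binom_det_sign n a b := 0 <= \det (binom_mx n a b) /\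
  ((forall i, (i < n)%N -> (a i <= b i)%N) -> 0 < \det (binom_mx n a b)).

Lemma sum_bin_range B lo hi a : (lo <= hi <= B)%N ->
  \sum_(k < B) (if (lo <= k < hi)%N then ('C(k, a))%:R else 0 : R)
  = ('C(hi, a.+1))%:R - ('C(lo, a.+1))%:R.
Proof.
case/andP=> le_lo_hi le_hi_B.
have sum_lt h : (h <= B)%N ->
    \sum_(k < B) (if (k < h)%N then ('C(k, a))%:R else 0 : R) = ('C(h, a.+1))%:R.
  move=> le_hB; rewrite -big_mkcond /=.
  by rewrite -(big_ord_widen B (fun k => ('C(k, a))%:R : R)) // -natr_sum hockey_stick.
rewrite -(sum_lt hi) // -(sum_lt lo (leq_trans le_lo_hi le_hi_B)) -sumrB.
apply: eq_bigr => k _; case: (ltnP k lo) => [lt_k_lo | //=]; last by rewrite subr0.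
by rewrite (leq_trans lt_k_lo le_lo_hi) subrr.
Qed.

Lemma det_sum_col n B (F : 'I_n -> 'I_n -> 'I_B -> R) :
  \det (\matrix_(i, j) \sum_(k < B) F i j k) =
  \sum_(g : {ffun 'I_n -> 'I_B}) \det (\matrix_(i, j) F i j (g j)).
Proof.
rewrite -det_tr {1}/determinant.
under eq_bigr => s _ do under eq_bigr => i _ do rewrite !mxE.
under eq_bigr => s _ do rewrite bigA_distr_bigA big_distrr /=.
rewrite exchange_big /=; apply: eq_bigr => g _.
rewrite -det_tr /determinant; apply: eq_bigr => s _; congr (_ * _).
by apply: eq_bigr => i _; rewrite !mxE.
Qed.

Lemma det_col_eq0 n (A : 'M[R]_n) j : (forall i, A i j = 0) -> \det A = 0.
Proof. by move=> Aj0; rewrite (expand_det_col _ j) big1 // => i _; rewrite Aj0 mul0r. Qed.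

Definition interval_sum_mx N (al lo hi : nat -> nat) B : 'M[R]_N :=
  \matrix_(i, j) \sum_(k < B) (if (lo j <= k < hi j)%N then ('C(k, al i))%:R else 0).

Definition ffun_nat N B (g : {ffun 'I_N -> 'I_B}) (j : nat) : nat :=
  if insub j is Some o then val (g o) else 0%N.

Lemma ffun_natE N B (g : {ffun 'I_N -> 'I_B}) (o : 'I_N) : ffun_nat g o = g o.
Proof. by rewrite /ffun_nat valK. Qed.

(* By multilinearity the determinant is a sum over the choices of one [k] per
   column; the intervals being disjoint and ordered, every choice that does not
   vanish is an increasing sequence, hence a binomial determinant. *)
Lemma interval_sum_det_sign N al lo hi B :
  increasing N al -> (forall j, (j.+1 < N)%N -> (hi j <= lo j.+1)%N) ->
  (forall j, (j < N)%N -> (hi j <= B)%N) ->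
  (forall g, increasing N g -> binom_det_sign N al g) ->
  0 <= \det (interval_sum_mx N al lo hi B) /\
  ((forall j, (j < N)%N -> (lo j < hi j)%N /\ (al j < hi j)%N) ->
     0 < \det (interval_sum_mx N al lo hi B)).
Proof.
move=> inc_al disj hiB IH.
pose term (g : {ffun 'I_N -> 'I_B}) : 'M[R]_N :=
  \matrix_(i, j) (if (lo j <= g j < hi j)%N then ('C(g j, al i))%:R else 0).
have term_binom (g : {ffun 'I_N -> 'I_B}) : [forall j : 'I_N, (lo j <= g j < hi j)%N] ->
    term g = binom_mx N al (ffun_nat g) /\ increasing N (ffun_nat g).
  move=> /forallP g_in; split.
    by apply/matrixP => i j; rewrite !mxE g_in ffun_natE.
  move=> i lt_iN; have lt_iN' : (i < N)%N by apply: ltnW.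
  have /andP[_ lt_i] := g_in (Ordinal lt_iN').
  have /andP[ge_i1 _] := g_in (Ordinal lt_iN).
  rewrite -[i]/(nat_of_ord (Ordinal lt_iN')) -[i.+1]/(nat_of_ord (Ordinal lt_iN)).
  rewrite !ffun_natE; exact: leq_trans lt_i (leq_trans (disj i lt_iN) ge_i1).
have term_ge0 (g : {ffun 'I_N -> 'I_B}) : 0 <= \det (term g).
  case g_in: [forall j : 'I_N, (lo j <= g j < hi j)%N].
    by have [-> /IH []] := term_binom g g_in.
  have [j g_out] := forallPn (negbT g_in).
  by rewrite (det_col_eq0 (j := j)) // => i; rewrite mxE (negPf g_out).
rewrite /interval_sum_mx det_sum_col; split; first by apply: sumr_ge0 => g _; apply: term_ge0.
move=> nonempty; have last_in (j : 'I_N) : ((hi j).-1 < B)%N.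
  have [lt_lo_hi _] := nonempty j (ltn_ord j); have := hiB j (ltn_ord j); lia.
pose g0 : {ffun 'I_N -> 'I_B} := [ffun j => Ordinal (last_in j)].
rewrite (bigD1 g0) //=; apply: ltr_wpDr; first by apply: sumr_ge0 => g _; apply: term_ge0.
have g0_in : [forall j : 'I_N, (lo j <= g0 j < hi j)%N].
  apply/forallP => j; rewrite ffunE /=; have [lt_lo_hi _] := nonempty j (ltn_ord j).
  apply/andP; lia.
rewrite -/(term g0); have [-> /IH [_]] := term_binom g0 g0_in; apply=> i lt_iN.
rewrite -[i]/(nat_of_ord (Ordinal lt_iN)) ffun_natE ffunE /=.
have [_ ] := nonempty i lt_iN; lia.
Qed.

(* Right multiplication by [diff_mx n] replaces every column but the first by
   its difference with the previous one. *)
Definition diff_mx n : 'M[R]_n :=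
  \matrix_(k, j) (if k == j then 1 else if (k.+1 == j)%N then -1 else 0).

Lemma det_diff_mx n : \det (diff_mx n) = 1.
Proof.
rewrite -det_tr det_trig; last first.
  apply/is_trig_mxP => i j lt_ij; rewrite !mxE.
  by rewrite gtn_eqF ?ltnS ?(ltnW lt_ij) // -val_eqE gtn_eqF.
by rewrite big1 // => i _; rewrite !mxE eqxx.
Qed.

Lemma mulmx_diff_mxE n (A : 'M[R]_n.+1) i j :
  (A *m diff_mx n.+1) i j = A i j - (if (0 < j)%N then A i (inord j.-1) else 0).
Proof.
rewrite mxE (bigD1 j) //= !mxE eqxx mulr1.
case: (posnP j) => [j0 | j_gt0].
  by rewrite subr0 big1 ?addr0 // => k ne_kj; rewrite !mxE (negPf ne_kj) j0 mulr0.
have lt_j1 : (j.-1 < n.+1)%N by have := ltn_ord j; lia.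
have ne_j1j : (inord j.-1 : 'I_n.+1) != j by rewrite -val_eqE /= inordK //; apply/eqP; lia.
rewrite (bigD1 (inord j.-1)) //= !mxE (negPf ne_j1j) inordK // prednK // eqxx.
rewrite mulrN1 big1 ?addr0 // => k /andP[ne_kj ne_kj1].
rewrite !mxE (negPf ne_kj); case: eqP => [e|]; last by rewrite mulr0.
by move: ne_kj1; rewrite -val_eqE /= -e /= inordK ?eqxx // ltnW.
Qed.

Lemma binom_mx_diffE n a b i j :
  (binom_mx n.+1 a b *m diff_mx n.+1) i j =
  ('C(b j, a i))%:R - (if (0 < j)%N then ('C(b j.-1, a i))%:R else 0).
Proof.
rewrite mulmx_diff_mxE !mxE; case: posnP => // _.
by rewrite inordK //; have := ltn_ord j; lia.
Qed.

Lemma det_binom_mx_diff n a b :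
  \det (binom_mx n.+1 a b) = \det (binom_mx n.+1 a b *m diff_mx n.+1).
Proof. by rewrite det_mulmx det_diff_mx mulr1. Qed.

(* When [a 0 > 0], the column differences are hockey-stick sums of binomials
   with every [a i] lowered by one. *)
Lemma binom_det_sign_pred n a b : increasing n.+1 a -> increasing n.+1 b ->
  (0 < a 0)%N ->
  (forall g, increasing n.+1 g -> binom_det_sign n.+1 (fun i => (a i).-1) g) ->
  binom_det_sign n.+1 a b.
Proof.
move=> inc_a inc_b a0_gt0 IH.
have a_gt0 i : (i < n.+1)%N -> (0 < a i)%N.
  by move=> lt_in; apply: leq_trans a0_gt0 (increasing_le inc_a (leq0n i) lt_in).
have le_b j : (j < n.+1)%N -> (b j <= b n)%N.
  by move=> lt_jn; apply: (increasing_le inc_b) => //; rewrite -ltnS.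
pose lo j := if (0 < j)%N then b j.-1 else 0%N.
rewrite /binom_det_sign det_binom_mx_diff.
have -> : binom_mx n.+1 a b *m diff_mx n.+1 =
    interval_sum_mx n.+1 (fun i => (a i).-1) lo b (b n).
  apply/matrixP => i j; rewrite binom_mx_diffE mxE sum_bin_range; last first.
    rewrite le_b // andbT /lo; case: posnP => // j_gt0.
    by apply/ltnW/(increasing_lt inc_b); rewrite ?prednK.
  rewrite prednK ?a_gt0 // /lo; case: posnP => // _.
  by rewrite (@bin_small 0) ?subr0 ?a_gt0.
have [det_ge0 det_gt0] := interval_sum_det_sign (lo := lo) (hi := b) (B := b n)
  (increasing_pred inc_a a0_gt0) (fun j _ => leqnn _) le_b IH.
split=> // le_ab; apply: det_gt0 => j lt_jn; have := le_ab j lt_jn.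
have := a_gt0 j lt_jn; rewrite /lo; case: (posnP j) => [j0 | j_gt0].
  by rewrite j0 /=; lia.
by have := inc_b j.-1; rewrite prednK // => /(_ lt_jn); lia.
Qed.

(* When [a 0 = 0], the first row becomes [1 0 ... 0]; expanding along it leaves
   a hockey-stick matrix of size [n]. *)
Lemma binom_det_sign_drop n a b : increasing n.+1 a -> increasing n.+1 b ->
  a 0 = 0%N ->
  (forall g, increasing n g -> binom_det_sign n (fun i => (a i.+1).-1) g) ->
  binom_det_sign n.+1 a b.
Proof.
move=> inc_a inc_b a0 IH.
have a_gt0 i : (i < n)%N -> (0 < a i.+1)%N.
  by move=> lt_in; rewrite -a0; apply: (increasing_lt inc_a).
have le_b j : (j < n)%N -> (b j.+1 <= b n)%N.
  by move=> lt_jn; apply: (increasing_le inc_b).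
rewrite /binom_det_sign det_binom_mx_diff (expand_det_row _ ord0) (bigD1 ord0) //=.
rewrite big1 ?addr0 => [|j ne_j0]; last first.
  by rewrite binom_mx_diffE a0 !bin0 lt0n (_ : j != 0%N :> nat) ?subrr ?mul0r.
rewrite binom_mx_diffE a0 bin0 subr0 mul1r /cofactor /= expr0 mul1r.
have -> : row' ord0 (col' ord0 (binom_mx n.+1 a b *m diff_mx n.+1)) =
    interval_sum_mx n (fun i => (a i.+1).-1) b (fun j => b j.+1) (b n).
  apply/matrixP => i j; rewrite [LHS]mxE [LHS]mxE binom_mx_diffE !lift0 /= mxE.
  rewrite sum_bin_range ?prednK ?a_gt0 //.
  by rewrite le_b // andbT ltnW // inc_b // ltnS.
have [det_ge0 det_gt0] := interval_sum_det_sign (lo := b) (hi := fun j => b j.+1) (B := b n)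
  (increasing_behead_pred inc_a) (fun j _ => leqnn _) le_b IH.
split=> // le_ab; apply: det_gt0 => j lt_jn; split; first exact: inc_b.
by have := le_ab j.+1 lt_jn; have := a_gt0 j lt_jn; lia.
Qed.

Lemma binom_det_signP n a b : increasing n a -> increasing n b -> binom_det_sign n a b.
Proof.
elim: n a b => [|n IHn] a b; first by rewrite /binom_det_sign det_mx00 ler01 ltr01.
have [k le_a0k] := ubnP (a 0%N); elim: k a b le_a0k => // k IHk a b lt_a0k inc_a inc_b.
case: (posnP (a 0%N)) => [a0 | a0_gt0].
  by apply: binom_det_sign_drop => // g inc_g; apply: IHn => //; apply: increasing_behead_pred.
apply: binom_det_sign_pred => // g inc_g; apply: IHk => //; first lia.
exact: increasing_pred.
Qed.

Lemma binom_det_gt0 n a b : increasing n a -> increasing n b ->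
  (forall i, (i < n)%N -> (a i <= b i)%N) -> 0 < \det (binom_mx n a b).
Proof. by move=> inc_a inc_b; apply: (binom_det_signP inc_a inc_b).2. Qed.

End BinomialDeterminants.

Lemma selection_nth_lt s i j : selection s -> i < j -> j < size s ->
  nth 0 s i < nth 0 s j.
Proof.
move=> sel_s lt_ij lt_js; apply: (sorted_ltn_nth ltn_trans 0 sel_s) => //.
by rewrite inE (ltn_trans lt_ij).
Qed.

Lemma selection_nth_le s i j : selection s -> i <= j -> j < size s ->
  nth 0 s i <= nth 0 s j.
Proof.
move=> sel_s; rewrite leq_eqVlt => /orP[/eqP-> // | lt_ij] lt_js.
exact/ltnW/selection_nth_lt.
Qed.

Lemma index_selection_lt s x y : selection s -> x \in s -> y \in s -> x < y ->
  index x s < index y s.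
Proof.
move=> sel_s xs ys lt_xy; rewrite ltnNge; apply/negP => le_yx.
have := selection_nth_le sel_s le_yx; rewrite index_mem => /(_ xs).
by rewrite !nth_index // leqNgt lt_xy.
Qed.

Lemma leq_index_subseq s' s j : selection s -> subseq s' s -> j < size s' ->
  j <= index (nth 0 s' j) s.
Proof.
move=> sel_s sub_s's; have sel_s' := subseq_sorted ltn_trans sub_s's sel_s.
have mem_s j' : j' < size s' -> nth 0 s' j' \in s.
  by move=> lt_j's; apply: (mem_subseq sub_s's); rewrite mem_nth.
elim: j => // j IHj lt_js; apply: leq_ltn_trans (IHj (ltnW lt_js)) _.
apply: index_selection_lt => //; last exact: selection_nth_lt.
  exact: mem_s (ltnW lt_js).
exact: mem_s.
Qed.

Lemma nth_subseq_ge s' s j : selection s -> subseq s' s -> j < size s' ->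
  nth 0 s j <= nth 0 s' j.
Proof.
move=> sel_s sub_s's lt_js.
have mem_j : nth 0 s' j \in s by apply: (mem_subseq sub_s's); rewrite mem_nth.
rewrite -(nth_index 0 mem_j); apply: selection_nth_le => //.
  exact: leq_index_subseq.
by rewrite index_mem.
Qed.

Lemma sorted_ltn_subseq s1 s2 : sorted ltn s1 -> sorted ltn s2 ->
  {subset s1 <= s2} -> subseq s1 s2.
Proof.
move=> sorted1 sorted2 sub12; have uniq2 := sorted_uniq ltn_trans ltnn sorted2.
apply/(@subseq_uniqP _ s1 s2 uniq2)/(irr_sorted_eq ltn_trans ltnn) => //.
  exact: (sorted_filter ltn_trans).
by move=> x; rewrite mem_filter; case: (boolP (x \in s1)) => // /sub12 ->.
Qed.

Lemma sorted_ltn_mkseq g k : increasing k g -> sorted ltn (mkseq g k).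
Proof.
move=> inc_g; apply/(sortedP 0) => i; rewrite size_mkseq => lt_ik.
by rewrite !nth_mkseq //; [exact: inc_g | exact: ltnW].
Qed.

Lemma bigmax_ord_condP K (P : nat -> bool) : P 0 ->
  let x := \max_(i < K.+1 | P i) i in
  [/\ x < K.+1, P x & forall i, i < K.+1 -> P i -> i <= x].
Proof.
move=> P0 x.
have x_eq := @bigmax_eq_arg _ ord0 (fun i : 'I_K.+1 => P i) (fun i => nat_of_ord i) P0.
split; first by rewrite /x x_eq.
  by rewrite /x x_eq; case: arg_maxnP.
by move=> i lt_iK Pi; apply: (leq_bigmax_cond (Ordinal lt_iK)).
Qed.

Section FirstColumn.
Variables r c : seq nat.
Local Notation f := (firstcol r c).

Lemma firstcol_before i k : k < f i -> nth 0 c k < nth 0 r i.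
Proof. by move=> /(before_find 0) /negbT; rewrite -ltnNge. Qed.

Lemma firstcol_min i k : nth 0 r i <= nth 0 c k -> f i <= k.
Proof.
by move=> le_rc; rewrite leqNgt; apply/negP => /firstcol_before; rewrite ltnNge le_rc.
Qed.

Lemma nth_firstcol i k : k < size c -> nth 0 r i <= nth 0 c k ->
  nth 0 r i <= nth 0 c (f i).
Proof.
move=> lt_kc le_rc; apply: (nth_find 0); apply/hasP.
by exists (nth 0 c k); rewrite ?mem_nth.
Qed.

Lemma firstcol_mono i i' : selection r -> i <= i' -> i' < size r -> f i <= f i'.
Proof.
move=> sel_r le_ii' lt_i'r; case: (ltnP (f i') (size c)) => [lt_fc | le_cf].
  have has_i' : has (fun ck => nth 0 r i' <= ck) c by rewrite has_find.
  exact/firstcol_min/(leq_trans (selection_nth_le sel_r le_ii' lt_i'r))/(nth_find 0).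
exact: leq_trans (find_size _ _) le_cf.
Qed.

Lemma firstcol_le_beta i : f i <= beta r c i.
Proof. by case: i => //= i; apply: leq_maxl. Qed.

Lemma beta_lt : {homo beta r c : i j / i < j}.
Proof. by apply: homo_ltn ltn_trans _ => i; rewrite /= leq_max leqnn orbT. Qed.

Lemma beta_le : {homo beta r c : i j / i <= j}.
Proof. by move=> i j; rewrite leq_eqVlt => /orP[/eqP-> // | /beta_lt/ltnW]. Qed.

Lemma beta_restart i : exists2 s, s <= i &
  beta r c s = f s /\ beta r c i = f s + (i - s).
Proof.
elim: i => [|i [s le_si [beta_s beta_i]]]; first by exists 0; rewrite ?addn0.
case: (leqP (f i.+1) (beta r c i).+1) => [le_f | lt_f].
  by exists s; [exact: leqW | rewrite /= (maxn_idPr le_f) beta_i; split => //; lia].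
by exists i.+1; rewrite //= (maxn_idPl (ltnW lt_f)) subnn addn0.
Qed.

End FirstColumn.

Section GreedyPair.
Variables (m n : nat) (r c : seq nat).
Hypotheses (sel_r : selection r) (sel_c : selection c)
  (size_r : size r = m.+1) (size_c : size c = n.+1)
  (r0_le : nth 0 r 0 <= nth 0 c n).

Local Notation M := (Mdef m n r c).
Local Notation p := (pdef m n r c).
Local Notation f := (firstcol r c).

Lemma nth_c_le_last k : nth 0 c k <= nth 0 c n.
Proof.
case: (ltnP k n.+1) => [lt_kn | le_nk]; first by apply: selection_nth_le; rewrite ?size_c.
by rewrite nth_default ?size_c.
Qed.

Lemma MdefP : [/\ M <= m, nth 0 r M <= nth 0 c n &
  forall i, i <= m -> nth 0 r i <= nth 0 c n -> i <= M].
Proof.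
have [lt_Mm r_M max_M] := @bigmax_ord_condP m (fun i => nth 0 r i <= nth 0 c n) r0_le.
by split=> [|//|i]; [exact: lt_Mm | rewrite -ltnS; apply: max_M].
Qed.

Lemma leq_Mdef i : i <= M -> nth 0 r i <= nth 0 c n.
Proof.
have [le_Mm r_M _] := MdefP => le_iM; apply: leq_trans r_M.
by apply: selection_nth_le; rewrite ?size_r.
Qed.

Lemma pdefP : [/\ p <= M, beta r c p <= n &
  forall i, i <= M -> beta r c i <= n -> i <= p].
Proof.
have beta0 : beta r c 0 <= n by apply: firstcol_min r0_le.
have [lt_pM beta_p max_p] := @bigmax_ord_condP M (fun i => beta r c i <= n) beta0.
by split=> [|//|i]; [exact: lt_pM | rewrite -ltnS; apply: max_p].
Qed.

Lemma beta_le_n i : i <= p -> beta r c i <= n.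
Proof. by have [_ beta_p _] := pdefP => /beta_le/leq_trans; apply. Qed.

Lemma pdef_le_m : p <= m.
Proof. by have [le_pM _ _] := pdefP; have [le_Mm _ _] := MdefP; apply: leq_trans le_Mm. Qed.

Lemma nth_r_le_beta i : i <= p -> nth 0 r i <= nth 0 c (beta r c i).
Proof.
move=> le_ip; have [le_pM _ _] := pdefP.
have r_i := leq_Mdef (leq_trans le_ip le_pM).
apply: leq_trans (nth_firstcol _ r_i) _; first by rewrite size_c.
by apply: selection_nth_le; rewrite ?firstcol_le_beta ?size_c ?ltnS ?beta_le_n.
Qed.

Lemma hat_ordered_subpair : ordered_subpair r c (rhat m n r c) (chat m n r c).
Proof.
have lt_pm : p < size r by rewrite size_r ltnS pdef_le_m.
split; rewrite ?size_mkseq //.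
- apply: sorted_ltn_subseq => //.
    apply: sorted_ltn_mkseq => i lt_ip; apply: selection_nth_lt => //.
    exact: leq_trans lt_ip lt_pm.
  move=> x /mapP[i]; rewrite mem_iota => /andP[_ lt_ip] ->.
  by rewrite mem_nth // (leq_trans lt_ip).
- apply: sorted_ltn_subseq => //.
    apply: sorted_ltn_mkseq => i lt_ip; apply: selection_nth_lt => //; first exact: beta_lt.
    by rewrite size_c ltnS beta_le_n.
  move=> x /mapP[i]; rewrite mem_iota => /andP[_ lt_ip] ->.
  by rewrite mem_nth // size_c ltnS beta_le_n.
- by move=> i lt_ip; rewrite !nth_mkseq // nth_r_le_beta.
Qed.

(* The [j]-th pair of any ordered sub-pair uses a row at or below [r_j] and a
   column no earlier than [c_(beta j)]: the greedy choice is never overtaken. *)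
Lemma ordered_subpair_size_le r' c' : ordered_subpair r c r' c' -> size r' <= p.+1.
Proof.
case=> sub_r sub_c size_eq le_rc.
have [_ _ max_M] := MdefP; have [_ _ max_p] := pdefP.
pose b j := index (nth 0 c' j) c.
have mem_c j : j < size r' -> nth 0 c' j \in c.
  by move=> lt_jr; apply: (mem_subseq sub_c); rewrite mem_nth -?size_eq.
have b_lt j : j < size r' -> b j <= n.
  by move=> /mem_c; rewrite -index_mem size_c ltnS.
have r_le_cb j : j < size r' -> nth 0 r j <= nth 0 c (b j).
  move=> lt_jr; rewrite nth_index ?mem_c //.
  exact: leq_trans (nth_subseq_ge sel_r sub_r lt_jr) (le_rc j lt_jr).
have beta_le_b j : j < size r' -> beta r c j <= b j.
  elim: j => [|j IHj] lt_jr; first exact/firstcol_min/r_le_cb.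
  rewrite /= geq_max (firstcol_min (r_le_cb _ lt_jr)).
  apply: leq_ltn_trans (IHj (ltnW lt_jr)) _; apply: index_selection_lt => //.
  - exact/mem_c/ltnW.
  - exact: mem_c.
  apply: selection_nth_lt (subseq_sorted ltn_trans sub_c sel_c) _ _ => //.
  by rewrite -size_eq.
case size_r': (size r') => [//|q]; have lt_q : q < size r' by rewrite size_r'.
rewrite ltnS; apply: max_p; last exact: leq_trans (beta_le_b q lt_q) (b_lt q lt_q).
apply: max_M; last exact: leq_trans (r_le_cb q lt_q) (nth_c_le_last _).
by rewrite -ltnS -size_r -size_r' size_subseq.
Qed.

Lemma hat_maximal_ordered_subpair :
  maximal_ordered_subpair r c (rhat m n r c) (chat m n r c).
Proof.
split; first exact: hat_ordered_subpair.
by move=> r' c' /ordered_subpair_size_le; rewrite size_mkseq.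
Qed.

End GreedyPair.

Section RankBounds.
Variable R : fieldType.
Local Open Scope ring_scope.

Lemma mul_pid_mxE m1 n1 s (A : 'M[R]_(m1, n1)) i j :
  (pid_mx s *m A) i j = if (i < s)%N then A i j else 0.
Proof.
rewrite mxE (bigD1 i) //= big1 ?addr0 => [|k ne_ki]; last first.
  by rewrite mxE eq_sym (inj_eq val_inj) (negPf ne_ki) mul0r.
by rewrite mxE eqxx /=; case: ifP; rewrite ?mul1r ?mul0r.
Qed.

Lemma mulmx_pidE m1 n1 t (A : 'M[R]_(m1, n1)) i j :
  (A *m pid_mx t) i j = if (j < t)%N then A i j else 0.
Proof.
rewrite mxE (bigD1 j) //= big1 ?addr0 => [|k ne_kj]; last first.
  by rewrite mxE (inj_eq val_inj) (negPf ne_kj) mulr0.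
by rewrite mxE eqxx /=; case: ifP; rewrite ?mulr1 ?mulr0.
Qed.

Lemma mxrank_zero_block m1 n1 (A : 'M[R]_(m1, n1)) s t :
  (s <= m1)%N -> (t <= n1)%N ->
  (forall (i : 'I_m1) (j : 'I_n1), (s <= i)%N -> (j < t)%N -> A i j = 0) ->
  (\rank A <= s + (n1 - t))%N.
Proof.
move=> le_sm le_tn A0; pose X := (pid_mx s : 'M[R]_m1) *m A; pose Y := A - X.
have Y_eq : Y = Y *m copid_mx t.
  apply/matrixP => i j; rewrite mulmxBr mulmx1 [RHS]mxE [X in _ + X]mxE mulmx_pidE.
  case: ifP => lt_jt; last by rewrite subr0.
  rewrite subrr /Y /X [LHS]mxE [X in _ + X]mxE mul_pid_mxE.
  case: ifP => [_ | /negbT]; first by rewrite subrr.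
  by rewrite -leqNgt => le_si; rewrite subr0 A0.
rewrite -(subrK X A) addrC -/Y; apply: leq_trans (mxrank_add _ _) _; apply: leq_add.
  by apply: leq_trans (mxrankM_maxl _ _) _; rewrite rank_pid_mx.
by rewrite Y_eq; apply: leq_trans (mxrankM_maxr _ _) _; rewrite rank_copid_mx.
Qed.

Lemma unit_minor_row_basis m1 n1 k (A : 'M[R]_(m1, n1)) (f : 'I_k -> 'I_m1)
    (g : 'I_k -> 'I_n1) :
  colsub g (rowsub f A) \in unitmx -> (\rank A <= k)%N ->
  [/\ \rank A = k, row_free (rowsub f A) & (rowsub f A == A)%MS].
Proof.
move=> minor_unit rankA_le.
have rank_rows : (k <= \rank (rowsub f A))%N.
  rewrite -{1}(mxrank_unit minor_unit).
  by rewrite -[X in colsub g X]mulmx1 -mulmx_colsub mxrankM_maxl.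
have rank_le := mxrankS (rowsub_sub f A).
have rankA : \rank A = k.
  by apply/eqP; rewrite eqn_leq rankA_le (leq_trans rank_rows rank_le).
have rank_f : \rank (rowsub f A) = k.
  by apply/eqP; rewrite eqn_leq rank_rows andbT (leq_trans rank_le rankA_le).
split=> //; first by rewrite /row_free rank_f.
by rewrite -(mxrank_leqif_eq (rowsub_sub f A)).2 rank_f rankA.
Qed.

Lemma unit_minor_col_basis m1 n1 k (A : 'M[R]_(m1, n1)) (f : 'I_k -> 'I_m1)
    (g : 'I_k -> 'I_n1) :
  colsub g (rowsub f A) \in unitmx -> (\rank A <= k)%N ->
  row_free (colsub g A)^T /\ ((colsub g A)^T == A^T)%MS.
Proof.
move=> minor_unit rankA_le.
have minor_unit_tr : colsub f (rowsub g A^T) \in unitmx.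
  have -> : colsub f (rowsub g A^T) = (colsub g (rowsub f A))^T.
    by apply/matrixP => i j; rewrite !mxE.
  by rewrite unitmx_tr.
have -> : (colsub g A)^T = rowsub g A^T by apply/matrixP => i j; rewrite !mxE.
by have [] := unit_minor_row_basis minor_unit_tr; rewrite ?mxrank_tr.
Qed.

End RankBounds.

Lemma Tsub_entry_eq0 (R : pzRingType) a b r c (i : 'I_a) (j : 'I_b) :
  nth 0 c j < nth 0 r i -> Tsub R a b r c i j = 0%R.
Proof. by move=> lt_cr; rewrite mxE bin_small. Qed.

Section PascalSubmatrix.
Variable R : numFieldType.
Variables (m n : nat) (r c : seq nat).
Hypotheses (sel_r : selection r) (sel_c : selection c)
  (size_r : size r = m.+1) (size_c : size c = n.+1).

Local Notation T := (Tsub R m.+1 n.+1 r c).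
Local Notation p := (pdef m n r c).
Local Notation f := (firstcol r c).

Lemma Tsub_eq0 : nth 0 c n < nth 0 r 0 -> T = 0%R.
Proof.
move=> lt_cr; apply/matrixP => i j; rewrite [RHS]mxE Tsub_entry_eq0 //.
apply: leq_ltn_trans (nth_c_le_last sel_c size_c j) (leq_trans lt_cr _).
by apply: selection_nth_le; rewrite ?size_r.
Qed.

Hypothesis r0_le : nth 0 r 0 <= nth 0 c n.

Lemma rank_Tsub_le : (\rank T <= p.+1)%N.
Proof.
have [le_pM beta_p max_p] := pdefP m r0_le.
have [le_Mm _ max_M] := MdefP m r0_le.
have le_pm := pdef_le_m m r0_le.
case: (ltnP p (Mdef m n r c)) => [lt_pM | le_Mp]; last first.
  apply: leq_trans (mxrank_zero_block (s := (Mdef m n r c).+1) (t := n.+1) _ _ _) _ => //.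
  - move=> i j lt_Mi _; apply: Tsub_entry_eq0; rewrite ltnNge; apply/negP => le_rc.
    have : i <= Mdef m n r c.
      by apply: max_M; [rewrite -ltnS | exact: leq_trans le_rc (nth_c_le_last sel_c size_c j)].
    by rewrite leqNgt lt_Mi.
  - by rewrite subnn addn0 ltnS.
have beta_p1 : n < beta r c p.+1.
  by rewrite ltnNge; apply/negP => /(max_p _ lt_pM); rewrite ltnn.
have f_p1 : f p.+1 <= n by apply/firstcol_min/(leq_Mdef sel_r size_r r0_le lt_pM).
have beta_pn : beta r c p = n by move: beta_p1; rewrite /= leq_max ltnNge f_p1 /=; lia.
have [s le_sp [beta_s beta_ps]] := beta_restart r c p.
apply: leq_trans (mxrank_zero_block (s := s) (t := f s) _ _ _) _.
- lia.
- by apply: leqW; rewrite -beta_s -beta_pn beta_le.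
- move=> i j le_si lt_jf; apply: Tsub_entry_eq0; apply: firstcol_before.
  by apply: leq_trans lt_jf (firstcol_mono c sel_r le_si _); rewrite size_r.
- lia.
Qed.

Lemma Tsub_hat_unit : Tsub R p.+1 p.+1 (rhat m n r c) (chat m n r c) \in unitmx.
Proof.
have le_pm := pdef_le_m m r0_le.
have beta_n := @beta_le_n m _ _ _ r0_le.
have -> : Tsub R p.+1 p.+1 (rhat m n r c) (chat m n r c) =
    binom_mx R p.+1 (nth 0 r) (fun j => nth 0 c (beta r c j)).
  by apply/matrixP => i j; rewrite !mxE !nth_mkseq.
rewrite unitmxE unitfE; apply/lt0r_neq0/binom_det_gt0.
- move=> i lt_ip; apply: selection_nth_lt; rewrite ?size_r //; lia.
- move=> i lt_ip; apply: selection_nth_lt => //; first exact: beta_lt.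
  by rewrite size_c ltnS beta_n.
- by move=> i lt_ip; apply: (nth_r_le_beta sel_r sel_c size_r size_c r0_le).
Qed.

Definition hat_row : 'I_p.+1 -> 'I_m.+1 := fun i => inord i.
Definition hat_col : 'I_p.+1 -> 'I_n.+1 := fun j => inord (beta r c j).

Lemma hat_colE j : hat_col j = beta r c j :> nat.
Proof. by rewrite inordK // ltnS (@beta_le_n m _ _ _ r0_le) // -ltnS. Qed.

Lemma hat_rowE i : hat_row i = i :> nat.
Proof. by rewrite inordK // ltnS (leq_trans _ (pdef_le_m m r0_le)) // -ltnS. Qed.

Lemma Tsub_rhat : Tsub R p.+1 n.+1 (rhat m n r c) c = rowsub hat_row T.
Proof. by apply/matrixP => i j; rewrite !mxE nth_mkseq // hat_rowE. Qed.

Lemma Tsub_chat : Tsub R m.+1 p.+1 r (chat m n r c) = colsub hat_col T.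
Proof. by apply/matrixP => i j; rewrite !mxE nth_mkseq // hat_colE. Qed.

Lemma Tsub_hat :
  Tsub R p.+1 p.+1 (rhat m n r c) (chat m n r c) = colsub hat_col (rowsub hat_row T).
Proof. by apply/matrixP => i j; rewrite !mxE !nth_mkseq // hat_rowE hat_colE. Qed.

End PascalSubmatrix.

Unset Implicit Arguments.

Theorem theorem3 (R : numFieldType) (m n : nat) (r c : seq nat) :
  selection r -> selection c -> size r = m.+1 -> size c = n.+1 ->
  (nth 0 c n < nth 0 r 0 ->
     Tsub R m.+1 n.+1 r c = 0%R /\ \rank (Tsub R m.+1 n.+1 r c) = 0) /\
  (nth 0 r 0 <= nth 0 c n ->
     let p := pdef m n r c in
     let hr := rhat m n r c in
     let hc := chat m n r c in
     [/\ maximal_ordered_subpair r c hr hc,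
         \rank (Tsub R m.+1 n.+1 r c) = p.+1,
         Tsub R p.+1 p.+1 hr hc \in unitmx,
         row_free (Tsub R p.+1 n.+1 hr c) /\
           (Tsub R p.+1 n.+1 hr c == Tsub R m.+1 n.+1 r c)%MS &
         row_free (Tsub R m.+1 p.+1 r hc)^T%R /\
           ((Tsub R m.+1 p.+1 r hc)^T%R == (Tsub R m.+1 n.+1 r c)^T%R)%MS]).
Proof.
move=> sel_r sel_c size_r size_c; split.
  by move=> lt_cr; rewrite Tsub_eq0 // mxrank0.
move=> r0_le /=; have minor_unit := Tsub_hat_unit R sel_r sel_c size_r size_c r0_le.
have rank_le := rank_Tsub_le R sel_r sel_c size_r size_c r0_le.
rewrite Tsub_hat // in minor_unit.
have [rankT free_rows eq_rows] := unit_minor_row_basis minor_unit rank_le.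
have [free_cols eq_cols] := unit_minor_col_basis minor_unit rank_le.
split=> //.
- exact: hat_maximal_ordered_subpair.
- by rewrite Tsub_hat.
- by rewrite Tsub_rhat.
- by rewrite Tsub_chat.
Qed.
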